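(* Exact provisioning of each of the following queries requires sketches of size $\min(2^{\Omega(k)},\Omega(n))$ bits: (i) the boolean conjunctive query with negation $Q_{\mathrm{NOTSUB}}:\ \mathit{ans}()\,{:\!-}\,A(x),\neg B(x)$ over a schema with unary relations $A,B$ (true on $I$ iff some $x$ has $A(x)\in I$ and $B(x)\notin I$); (ii) the recursive Datalog (negation-free) st-connectivity query over a binary edge relation $E$ with constants $\mathtt{s},\mathtt{t}$: $\mathit{ans}()\,{:\!-}\,T(\mathtt{t})$; $T(y)\,{:\!-}\,E(x,y),T(x)$; $T(\mathtt{s})$.
   Context: A hypothetical $h$ maps each instance $I$ to a sub-instance $h(I)\subseteq I$; for hypotheticals $h_1,\dots,h_k$ and nonempty scenario $S\subseteq[k]$, $I[S]=\bigcup_{i\in S}h_i(I)$; $n=|I|$. A provisioning scheme for $Q$: a (possibly randomized) compression algorithm mapping $(I,h_1,\dots,h_k)$ to a sketch $\Gamma$, and an extraction algorithm that, for any scenario $S$ and using only $\Gamma$, outputs $Q(I[S])$ (correct with probability at least $0.99$ per scenario). ''Requires sketches of size $\min(2^{\Omega(k)},\Omega(n))$'' means: there is $c>0$ such that every such scheme produces, on some instance with at most $n$ tuples and $k$ hypotheticals, a sketch of at least $c\min(2^{ck},n)$ bits. *)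

From Stdlib Require Import Reals ClassicalEpsilon.
From HB Require Import structures.
From mathcomp Require Import all_boot.

Set Implicit Arguments.
Unset Strict Implicit.
Unset Printing Implicit Defensive.

Definition holds (P : Prop) : bool :=
  if excluded_middle_informative P then true else false.

Section Provisioning.
Variable T : eqType.

(* An instance is a finite set of tuples, represented by a sequence
   (set semantics); its size is the number of distinct tuples. *)
Definition inst_size (I : seq T) : nat := size (undup I).

Definition is_hyp (h : seq T -> seq T) : Prop :=
  forall J : seq T, {subset h J <= J}.

Definition scen_inst (k : nat) (hs : 'I_k -> seq T -> seq T) (I : seq T)
  (S : {set 'I_k}) : seq T :=
  flatten [seq hs i I | i <- enum S].

(* Finitely supported distributions over sketches (bit strings). *)
Definition weight_sum (d : seq (R * seq bool)) : R :=
  List.fold_right (fun p acc => Rplus p.1 acc) R0 d.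

Definition is_dist (d : seq (R * seq bool)) : Prop :=
  (forall p, List.In p d -> Rle R0 p.1) /\ weight_sum d = R1.

Definition prob (d : seq (R * seq bool)) (E : seq bool -> bool) : R :=
  List.fold_right (fun p acc => Rplus (if E p.2 then p.1 else R0) acc) R0 d.

(* A (randomized) provisioning scheme for k hypotheticals: the compression
   algorithm maps (I, h_1..h_k) to a distribution over sketches; the
   (deterministic) extraction maps a sketch and a scenario to an answer. *)
Record scheme (k : nat) := Scheme {
  compress : seq T -> ('I_k -> seq T -> seq T) -> seq (R * seq bool);
  extract : seq bool -> {set 'I_k} -> bool
}.

Definition provisions (Q : seq T -> Prop) (k : nat) (P : scheme k) : Prop :=
  forall (I : seq T) (hs : 'I_k -> seq T -> seq T),
    (forall i, is_hyp (hs i)) ->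
    is_dist (compress P I hs) /\
    forall S : {set 'I_k}, S != set0 ->
      Rle (Rdiv (IZR 99) (IZR 100))
        (prob (compress P I hs)
           (fun G => extract P G S == holds (Q (scen_inst hs I S)))).

Definition requires_large_sketches (Q : seq T -> Prop) : Prop :=
  exists c : R, Rlt R0 c /\
  forall (k n : nat), 0 < k ->
  forall P : scheme k, provisions Q P ->
  exists (I : seq T) (hs : 'I_k -> seq T -> seq T),
    (forall i, is_hyp (hs i)) /\ inst_size I <= n /\
    exists (w : R) (G : seq bool),
      List.In (w, G) (compress P I hs) /\ Rlt R0 w /\
      Rle (Rmult c (Rmin (Rpower (INR 2) (Rmult c (INR k))) (INR n)))
          (INR (size G)).

End Provisioning.

Inductive factAB := FA of nat | FB of nat.
Definition fAB2p (a : factAB) : bool * nat :=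
  match a with FA x => (true, x) | FB x => (false, x) end.
Definition p2fAB (p : bool * nat) : factAB := if p.1 then FA p.2 else FB p.2.
Lemma fAB2pK : cancel fAB2p p2fAB. Proof. by case. Qed.
HB.instance Definition _ := Equality.copy factAB (can_type fAB2pK).

Definition Q_notsub (I : seq factAB) : Prop :=
  exists x : nat, FA x \in I /\ FB x \notin I.

(* Schema (ii): binary edge relation E over domain nat; tuples are pairs.
   Datalog: T(s).  T(y) :- E(x,y), T(x).  ans() :- T(t).
   T is the least fixpoint, given inductively. *)
Inductive derT (I : seq (nat * nat)) (s : nat) : nat -> Prop :=
| derT_base : derT I s s
| derT_step : forall x y, derT I s x -> (x, y) \in I -> derT I s y.

Definition Q_stconn (s t : nat) (I : seq (nat * nat)) : Prop := derT I s t.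

(* For every D with 2D < k, each query can store 2^D arbitrary bits x in an
   instance of size at most 3 * 2^D - 2 so that scenario S_j answers x_j.  The
   scenarios are indexed by the leaves j of a complete binary tree of depth D:
   S_j holds the label 2p + b of every branching b at depth p + 1 on the path
   to j, and a label 2D shared by all; they form an antichain.  For Q_NOTSUB,
   B(j') survives in scenario S_j exactly when j' <> j; for st-connectivity,
   S_j keeps, at each depth, the tree edges taking the same branch as the path
   to j, and all leaf-to-t edges, so from s only the path to j is reachable
   and t is reachable exactly when the edge from leaf j is present.
   By averaging, some sketch in the support for x decodes 99% of the bits of
   x correctly.  If all those sketches had fewer than 2^D/16 bits, fewer than
   2^(2^D/16 + 1) decoded words would have Hamming balls of radius 2^D/100
   covering the whole cube {0,1}^(2^D), which counting rules out.  Taking D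
   about min(k/2, log n) gives the bound with c = 1/128. *)

From Stdlib Require Import Reals Lra Classical.
From HB Require Import structures.
From mathcomp Require Import all_boot zify.

Set Implicit Arguments.
Unset Strict Implicit.
Unset Printing Implicit Defensive.

Section HammingBalls.
Variable m : nat.
Implicit Types (x y : {ffun 'I_m -> bool}) (Y : seq {ffun 'I_m -> bool}).

Definition agreement x y : nat := count (fun j => x j == y j) (enum 'I_m).

Lemma sum_exp2_agreement y : \sum_x 2 ^ agreement x y = 3 ^ m.
Proof.
transitivity (\sum_(x : {ffun 'I_m -> bool})
                \prod_j (fun j (b : bool) => if b == y j then 2 else 1) j (x j)).
  apply: eq_bigr => x _.
  by rewrite -big_mkcond big_const_seq /= iter_muln muln1 /agreement enumT.
rewrite -(bigA_distr_bigA (fun j (b : bool) => if b == y j then 2 else 1)) /=.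
rewrite -[in RHS](card_ord m) -prod_nat_const.
by apply: eq_bigr => j _; rewrite big_bool; case: (y j).
Qed.

Lemma card_ball_le y d :
  #|[pred x | m <= agreement x y + d]| * 2 ^ (m - d) <= 3 ^ m.
Proof.
rewrite -(sum_exp2_agreement y) -sum1_card big_distrl /= big_mkcond /=.
apply: leq_sum => x _; case: ifP => [|_] //.
by rewrite inE mul1n => Hx; rewrite leq_pexp2l //; lia.
Qed.

Lemma covering_bound d Y :
  (forall x, exists2 y, y \in Y & m <= agreement x y + d) ->
  2 ^ m * 2 ^ (m - d) <= size Y * 3 ^ m.
Proof.
move=> cover.
have card_cube : 2 ^ m <= \sum_(y <- Y) #|[pred x | m <= agreement x y + d]|.
  have -> : 2 ^ m = #|{ffun 'I_m -> bool}| by rewrite card_ffun card_bool card_ord.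
  rewrite -sum1_card.
  apply: (@leq_trans (\sum_x \sum_(y <- Y) (m <= agreement x y + d))).
    apply: leq_sum => x _; have [y yY Hy] := cover x.
    by rewrite (big_rem y yY) /= Hy.
  rewrite exchange_big /=; apply: leq_sum => y _.
  rewrite -sum1_card [leqRHS]big_mkcond /=.
  by apply: leq_sum => x _; rewrite inE; case: (m <= _).
apply: leq_trans (leq_mul card_cube (leqnn _)) _.
rewrite big_distrl /= -[X in _ <= X * _]count_predT -sum1_count big_distrl /=.
by apply: leq_sum => y _; rewrite mul1n card_ball_le.
Qed.

End HammingBalls.

Fixpoint bitseqs (L : nat) : seq (seq bool) :=
  if L is L'.+1 then [::] :: [seq b :: G | b <- [:: true; false], G <- bitseqs L']
  else [:: [::]].

Lemma size_bitseqs L : size (bitseqs L) < 2 ^ L.+1.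
Proof.
elim: L => [//|L IH].
rewrite -[size _]/((size [seq b :: G | b <- [:: true; false], G <- bitseqs L]).+1).
rewrite size_allpairs expnS /=; lia.
Qed.

Lemma mem_bitseqs L G : size G <= L -> G \in bitseqs L.
Proof.
elim: L G => [|L IH] [|b G] //= HG; rewrite in_cons /=.
by case: b; rewrite ?mem_cat (map_f _ (IH G HG)) ?orbT.
Qed.

Lemma leq_exp2rW a b e : a <= b -> a ^ e <= b ^ e.
Proof. by case: e => // e; rewrite leq_exp2r. Qed.

(* Blocks of five factors: 2^2 * 3^5 <= 4^5. *)
Lemma exp2_exp3_le_exp4 a m : a <= (m %/ 5).*2 -> 2 ^ a * 3 ^ m <= 4 ^ m.
Proof.
move=> le_a; rewrite (divn_eq m 5) !expnD !(mulnC (m %/ 5)) !expnM mulnA.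
apply: leq_mul; last exact: leq_exp2rW.
apply: (@leq_trans (4 ^ (m %/ 5) * (3 ^ 5) ^ (m %/ 5))); last by rewrite -expnMn leq_exp2rW.
have -> : 4 ^ (m %/ 5) = 2 ^ (m %/ 5).*2 by rewrite -mul2n expnM.
by rewrite leq_mul2r leq_pexp2l ?orbT.
Qed.

Lemma exp3_exp2_lt_exp4 m d : 0 < m -> 100 * d <= m -> 3 ^ m * 2 ^ d < 4 ^ m.
Proof.
move=> m_gt0 le_d; have [m_small|m_large] := ltnP m 100.
  have -> : d = 0 by lia.
  by rewrite muln1 ltn_exp2r.
have := @exp2_exp3_le_exp4 d.+1 m ltac:(lia).
apply: leq_trans; rewrite expnS mulnC -mulnA mulnC ltn_Pmull //.
by rewrite muln_gt0 !expn_gt0.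
Qed.

Lemma few_codes_lt m L d N :
  16 * L < m -> 100 * d <= m -> N < 2 ^ L.+1 -> N * 3 ^ m * 2 ^ d < 4 ^ m.
Proof.
move=> le_L le_d lt_N; rewrite -mulnA.
have pos : 0 < 3 ^ m * 2 ^ d by rewrite muln_gt0 !expn_gt0.
case: L le_L lt_N => [|L] le_L lt_N.
  apply: leq_ltn_trans (exp3_exp2_lt_exp4 _ le_d); last lia.
  by rewrite -[leqRHS]mul1n leq_mul2r -ltnS lt_N orbT.
apply: leq_trans (@exp2_exp3_le_exp4 (L.+2 + d) m _); last lia.
rewrite expnD -mulnA (mulnC (2 ^ d)) ltn_pmul2r //.
Qed.

Section Averaging.
Local Open Scope R_scope.
Variables (I : Type) (E : I -> seq bool -> bool) (s : seq I).

Definition expected_hits (d : seq (R * seq bool)) : R :=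
  List.fold_right Rplus 0 (map (fun j => prob d (E j)) s).

Lemma expected_hits_nil : expected_hits [::] = 0.
Proof. by rewrite /expected_hits; elim: s => //= j s' ->; ring. Qed.

Lemma expected_hits_cons p d :
  expected_hits (p :: d) = p.1 * INR (count (E^~ p.2) s) + expected_hits d.
Proof.
rewrite /expected_hits; elim: s => [|j s' IH] /=; first ring.
by rewrite IH plus_INR; case: (E j p.2) => /=; ring.
Qed.

Lemma expected_hits_ge d :
  (forall j, 99/100 <= prob d (E j)) -> INR (size s) * (99/100) <= expected_hits d.
Proof.
rewrite /expected_hits => Hj; elim: s => [|j s' IH]; first by rewrite /=; lra.
by rewrite [size _]/= S_INR /=; have := Hj j; lra.
Qed.

Lemma expected_hits_le d :
  (forall p, List.In p d -> 0 <= p.1) ->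
  (forall p, List.In p d -> 0 < p.1 -> (100 * count (E^~ p.2) s < 99 * size s)%N) ->
  100 * expected_hits d <= (INR (99 * size s) - 1) * weight_sum d.
Proof.
elim: d => [|p d IH] w_ge0 few_hits; first by rewrite expected_hits_nil /=; lra.
rewrite expected_hits_cons /=.
have := IH (fun q Hq => w_ge0 q (or_intror Hq)) (fun q Hq => few_hits q (or_intror Hq)).
suff : 100 * (p.1 * INR (count (E^~ p.2) s)) <= (INR (99 * size s) - 1) * p.1 by lra.
case: (Rle_lt_or_eq_dec _ _ (w_ge0 p (or_introl erefl))) => [w_gt0|<-]; last lra.
have /leP/le_INR := few_hits p (or_introl erefl) w_gt0.
rewrite S_INR mult_INR /=; nra.
Qed.

Lemma averaging d :
  is_dist d -> (forall j, 99/100 <= prob d (E j)) ->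
  exists w G, List.In (w, G) d /\ 0 < w /\ (99 * size s <= 100 * count (E^~ G) s)%N.
Proof.
move=> [w_ge0 sum_w] Hj; apply: NNPP => no_good.
have few_hits p : List.In p d -> 0 < p.1 -> (100 * count (E^~ p.2) s < 99 * size s)%N.
  case: p => w G HG w_gt0; rewrite ltnNge; apply/negP => many.
  by apply: no_good; exists w, G.
have := expected_hits_le w_ge0 few_hits; have := expected_hits_ge Hj.
rewrite sum_w mult_INR (_ : INR 99 = 99); first lra.
by rewrite /=; ring.
Qed.

End Averaging.

Section EncodingLowerBound.
Variables (T : eqType) (Q : seq T -> Prop) (k m : nat) (P : scheme T k).
Variables (inst : {ffun 'I_m -> bool} -> seq T) (hs : 'I_k -> seq T -> seq T).
Variable sc : 'I_m -> {set 'I_k}.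
Hypotheses (P_provisions : provisions Q P) (hs_hyp : forall i, is_hyp (hs i)).
Hypothesis sc_neq0 : forall j, sc j != set0.
Hypothesis inst_encodes : forall x j, holds (Q (scen_inst hs (inst x) (sc j))) = x j.

Definition decode (G : seq bool) : {ffun 'I_m -> bool} := [ffun j => extract P G (sc j)].

Lemma exists_decoding_sketch x :
  exists w G, List.In (w, G) (compress P (inst x) hs) /\ Rlt 0 w /\
    m <= agreement x (decode G) + m %/ 100.
Proof.
have [dist correct] := P_provisions (inst x) hs_hyp.
pose hit j G := extract P G (sc j) == holds (Q (scen_inst hs (inst x) (sc j))).
have [w [G [HG [w_gt0 hits]]]] :=
  averaging (E := hit) (enum 'I_m) dist (fun j => correct _ (sc_neq0 j)).
exists w, G; do 2!split=> //.
have -> : agreement x (decode G) = count (hit^~ G) (enum 'I_m).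
  by apply: eq_count => j; rewrite /hit ffunE inst_encodes eq_sym.
have := count_size (hit^~ G) (enum 'I_m); move: hits; rewrite size_enum_ord.
set c := count _ _ => hits le_c.
suff : m - c <= m %/ 100 by lia.
by rewrite leq_divRL //; lia.
Qed.

Lemma encoding_forces_long_sketch :
  0 < m ->
  exists x w G, List.In (w, G) (compress P (inst x) hs) /\ Rlt 0 w /\ m <= 16 * size G.
Proof.
move=> m_gt0; apply: NNPP => all_short.
pose L := (m - 1) %/ 16.
have cover x : exists2 y, y \in [seq decode G | G <- bitseqs L] & m <= agreement x y + m %/ 100.
  have [w [G [HG [w_gt0 close]]]] := exists_decoding_sketch x.
  have short : size G <= L.
    have : ~ m <= 16 * size G by move=> long; apply: all_short; exists x, w, G.
    by move/negP; rewrite -ltnNge /L leq_divRL //; lia.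
  by exists (decode G) => //; apply/map_f/mem_bitseqs.
have := covering_bound cover; rewrite size_map.
have := few_codes_lt (m := m) (L := L) (d := m %/ 100) _ _ (size_bitseqs L).
have -> : 4 ^ m = 2 ^ m * 2 ^ (m - m %/ 100) * 2 ^ (m %/ 100).
  by rewrite -!expnD -[4]/(2 ^ 2) -expnM; congr (_ ^ _); lia.
move=> lt_cube le_cube; have := leq_mul le_cube (leqnn (2 ^ (m %/ 100))).
by rewrite leqNgt lt_cube //; rewrite /L; lia.
Qed.

End EncodingLowerBound.

Lemma mem_scen_inst (T : eqType) k (hs : 'I_k -> seq T -> seq T) I (S : {set 'I_k}) f :
  reflect (exists2 i, i \in S & f \in hs i I) (f \in scen_inst hs I S).
Proof.
by apply: (iffP flatten_mapP) => -[i Si f_i]; exists i; rewrite ?mem_enum in Si *.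
Qed.

Lemma holds_eq (P : Prop) (b : bool) : (P <-> b) -> holds P = b.
Proof.
rewrite /holds => PbE; case: ClassicalEpsilon.excluded_middle_informative => [/PbE //|nP].
by case: b PbE => PbE //; case: nP; apply/PbE.
Qed.

Section Scenarios.
Variable D : nat.

(* Heap numbering of the complete binary tree of depth D: the root is 1 and
   the children of a are 2a and 2a+1, so the leaves are 2^D + j, j < 2^D. *)
Definition ancestor (j p : nat) : nat := (2 ^ D + j) %/ 2 ^ (D - p).

Lemma ancestor_range j p : p <= D -> j < 2 ^ D -> 2 ^ p <= ancestor j p < 2 ^ p.+1.
Proof.
move=> le_pD lt_j; rewrite /ancestor leq_divRL ?expn_gt0 // ltn_divLR ?expn_gt0 //.
rewrite -!expnD subnKC // addSn subnKC // expnS; lia.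
Qed.

Lemma ancestor_half j p : p < D -> (ancestor j p.+1)./2 = ancestor j p.
Proof.
by move=> lt_pD; rewrite /ancestor -divn2 -divnMA -expnSr subnSK.
Qed.

Lemma ancestor_leaf j : ancestor j D = 2 ^ D + j.
Proof. by rewrite /ancestor subnn divn1. Qed.

Lemma ancestor_root j : j < 2 ^ D -> ancestor j 0 = 1.
Proof. by move=> lt_j; have := ancestor_range (leq0n D) lt_j; rewrite expn1; lia. Qed.

Lemma ancestor_inj j j' : j < 2 ^ D -> j' < 2 ^ D ->
  (forall p, p < D -> odd (ancestor j p.+1) = odd (ancestor j' p.+1)) -> j = j'.
Proof.
move=> lt_j lt_j' same_bits.
suff /(_ D (leqnn D)) : forall p, p <= D -> ancestor j p = ancestor j' p.
  by rewrite !ancestor_leaf => /addnI.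
elim=> [|p IH] le_pD; first by rewrite !ancestor_root.
by rewrite -[LHS]odd_double_half -[RHS]odd_double_half !ancestor_half // same_bits // IH // ltnW.
Qed.

(* Hypothetical 2p+b (p < D) says that the path to the leaf takes the child
   with parity b at depth p+1; hypothetical 2D belongs to every scenario. *)
Definition in_scenario (j i : nat) : bool :=
  (i == D.*2) || (i./2 < D) && (odd i == odd (ancestor j (i./2).+1)).

Definition path_label (j p : nat) : nat := odd (ancestor j p.+1) + p.*2.

Lemma path_label_lt j p : p < D -> path_label j p < D.*2.
Proof. by rewrite /path_label -!muln2; case: odd => /=; lia. Qed.

Lemma path_label_half j p : (path_label j p)./2 = p.
Proof. exact: half_bit_double. Qed.

Lemma odd_path_label j p : odd (path_label j p) = odd (ancestor j p.+1).
Proof. by rewrite /path_label oddD odd_double addbF oddb. Qed.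

Lemma in_scenario_path_label j p : p < D -> in_scenario j (path_label j p).
Proof.
by move=> lt_pD; rewrite /in_scenario path_label_half lt_pD odd_path_label eqxx orbT.
Qed.

Lemma scenario_antichain j j' : j < 2 ^ D -> j' < 2 ^ D -> j != j' ->
  exists2 i, i < D.*2 & in_scenario j i && ~~ in_scenario j' i.
Proof.
move=> lt_j lt_j' /eqP neq_jj'.
have [p lt_pD bit_neq] : exists2 p, p < D & odd (ancestor j p.+1) != odd (ancestor j' p.+1).
  apply: NNPP => same; apply: neq_jj'; apply: ancestor_inj => // p lt_pD.
  by apply/eqP; apply: contra_notT same => ?; exists p.
exists (path_label j p); first exact: path_label_lt.
rewrite in_scenario_path_label //= /in_scenario negb_or.
by rewrite (ltn_eqF (path_label_lt _ lt_pD)) path_label_half lt_pD odd_path_label.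
Qed.

Definition scenario k (j : 'I_(2 ^ D)) : {set 'I_k} := [set i : 'I_k | in_scenario j i].

Lemma scenario_neq0 k j : D.*2 < k -> scenario k j != set0.
Proof. by move=> lt_Dk; apply/set0Pn; exists (Ordinal lt_Dk); rewrite inE /in_scenario eqxx. Qed.

End Scenarios.
Arguments scenario : clear implicits.

Lemma size_filter_enum_le n (x : {ffun 'I_n -> bool}) : size [seq j <- enum 'I_n | x j] <= n.
Proof. by rewrite size_filter -[leqRHS](size_enum_ord n) count_size. Qed.

Section NotSubset.
Variables (D k : nat).
Hypothesis lt_Dk : D.*2 < k.
Implicit Type x : {ffun 'I_(2 ^ D) -> bool}.

(* The B-facts only serve to falsify A(j') for j' <> j, so they are dropped
   when D = 0, which keeps that instance of size at most 1. *)
Definition notsub_inst x : seq factAB :=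
  [seq FA (val j) | j <- enum 'I_(2 ^ D) & x j] ++
  (if 0 < D then [seq FB j | j <- iota 0 (2 ^ D)] else [::]).

Definition notsub_hyp (i : 'I_k) (J : seq factAB) : seq factAB :=
  [seq f <- J | if f is FB j then ~~ in_scenario D j i else true].

Lemma notsub_hyp_sub i : is_hyp (notsub_hyp i).
Proof. by move=> J f; rewrite mem_filter => /andP[]. Qed.

Lemma notsub_encodes x (j : 'I_(2 ^ D)) :
  holds (Q_notsub (scen_inst notsub_hyp (notsub_inst x) (scenario D k j))) = x j.
Proof.
apply: holds_eq; split=> [[y [/mem_scen_inst[i0 _ Ay] By]]|xj].
  move: Ay; rewrite mem_filter mem_cat => /orP[|]; last by case: (0 < D) => // /mapP[].
  case/mapP=> j'; rewrite mem_filter => /andP[xj' _] [Ey]; rewrite {y}Ey in By.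
  have [-> //|neq_jj'] := eqVneq j j'.
  have [i lt_iD /andP[ij ij']] := scenario_antichain (ltn_ord j) (ltn_ord j') neq_jj'.
  have D_gt0 : 0 < D by move: lt_iD; rewrite -muln2; lia.
  case/negP: By; apply/mem_scen_inst; exists (Ordinal (ltn_trans lt_iD lt_Dk)).
    by rewrite inE.
  by rewrite mem_filter /= ij' mem_cat D_gt0 map_f ?orbT // mem_iota /=.
exists j; split.
  apply/mem_scen_inst; exists (Ordinal lt_Dk); first by rewrite inE /in_scenario eqxx.
  by rewrite mem_filter mem_cat map_f // mem_filter xj mem_enum.
by apply/mem_scen_inst => -[i ij]; rewrite mem_filter inE in ij * => /andP[/negP].
Qed.

Lemma notsub_inst_size x : inst_size (notsub_inst x) <= 3 * 2 ^ D - 2.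
Proof.
rewrite /inst_size (leq_trans (size_undup _)) // size_cat size_map.
apply: leq_trans (leq_add (size_filter_enum_le x) (leqnn _)) _.
have : 0 < 2 ^ D by rewrite expn_gt0.
case: ifP => [D_gt0|_]; last by rewrite /=; lia.
have : 2 ^ 1 <= 2 ^ D by rewrite leq_exp2l.
rewrite size_map size_iota; lia.
Qed.

End NotSubset.

Lemma exp2_level_uniq p q a : 2 ^ p <= a < 2 ^ p.+1 -> 2 ^ q <= a < 2 ^ q.+1 -> p = q.
Proof. by move=> /(trunc_log_eq (isT : 1 < 2)) <- /(trunc_log_eq (isT : 1 < 2)). Qed.

Section StConnectivity.
Variables (s t : nat).
Hypothesis neq_st : s <> t.
Variables (D k : nat).
Hypothesis lt_Dk : D.*2 < k.
Implicit Type x : {ffun 'I_(2 ^ D) -> bool}.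

Definition vertex (a : nat) : nat := if a == 1 then s else s + t + 1 + a.

Lemma vertex_neq_t a : vertex a <> t.
Proof. by rewrite /vertex; case: eqP => // _; lia. Qed.

Lemma vertex_inj a b : 0 < a -> 0 < b -> vertex a = vertex b -> a = b.
Proof. by rewrite /vertex; case: eqP => [->|_]; case: eqP => [->|_] //; lia. Qed.

Definition tree_edges : seq (nat * nat) :=
  [seq (vertex a./2, vertex a) | a <- iota 2 (2 ^ D.+1 - 2)].

Definition stconn_inst x : seq (nat * nat) :=
  tree_edges ++ [seq (vertex (2 ^ D + val j), t) | j <- enum 'I_(2 ^ D) & x j].

Definition labelled_edges (i : nat) : seq (nat * nat) :=
  if i == D.*2 then [seq (vertex (2 ^ D + j), t) | j <- iota 0 (2 ^ D)]
  else [seq (vertex a./2, vertex a) | a <- iota (2 ^ (i./2).+1) (2 ^ (i./2).+1) & odd a == odd i].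

Definition stconn_hyp (i : 'I_k) (J : seq (nat * nat)) : seq (nat * nat) :=
  [seq e <- J | e \in labelled_edges i].

Lemma stconn_hyp_sub i : is_hyp (stconn_hyp i).
Proof. by move=> J f; rewrite mem_filter => /andP[]. Qed.

Definition stconn_scen x (j : 'I_(2 ^ D)) := scen_inst stconn_hyp (stconn_inst x) (scenario D k j).

Lemma stconn_scen_edge x j u v : (u, v) \in stconn_scen x j ->
  (exists p a, [/\ p < D, 2 ^ p.+1 <= a < 2 ^ p.+2, odd a = odd (ancestor D j p.+1),
                   u = vertex a./2 & v = vertex a])
  \/ (exists2 j' : 'I_(2 ^ D), x j' & u = vertex (2 ^ D + j') /\ v = t).
Proof.
case/mem_scen_inst=> i; rewrite inE /in_scenario mem_filter => /orP[/eqP iE|].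
  rewrite /labelled_edges iE eqxx mem_cat => /andP[/mapP[a _ [_ vt]] /orP[|]].
    by case/mapP=> b _ [_ vb]; case: (vertex_neq_t (etrans (esym vb) vt)).
  case/mapP=> j'; rewrite mem_filter => /andP[xj' _] [-> ->].
  by right; exists j'.
case/andP=> lt_iD /eqP odd_i.
have lt_i : i < D.*2 by move: lt_iD; rewrite -divn2 -muln2; lia.
rewrite /labelled_edges (ltn_eqF lt_i) => /andP[/mapP[a + [-> ->]] _].
rewrite mem_filter mem_iota => /andP[/eqP odd_a lvl].
left; exists i./2, a; split=> //; last by rewrite odd_a.
by move: lvl; rewrite !expnS; lia.
Qed.

Lemma stconn_reach_ancestor x (j : 'I_(2 ^ D)) p : p <= D ->
  derT (stconn_scen x j) s (vertex (ancestor D j p)).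
Proof.
elim: p => [_|p IH lt_pD]; first by rewrite ancestor_root // /vertex eqxx; constructor.
apply: derT_step (IH (ltnW lt_pD)) _.
have [lo hi] := andP (ancestor_range lt_pD (ltn_ord j)).
have lt_lab := path_label_lt j lt_pD.
apply/mem_scen_inst; exists (Ordinal (ltn_trans lt_lab lt_Dk)).
  by rewrite inE in_scenario_path_label.
rewrite -(ancestor_half j lt_pD) mem_filter /labelled_edges /= (ltn_eqF lt_lab).
rewrite path_label_half mem_cat map_f ?mem_filter ?odd_path_label ?eqxx ?mem_iota //=.
  have le_pD : 2 ^ p.+2 <= 2 ^ D.+1 by rewrite leq_exp2l.
  have : 0 < 2 ^ p by rewrite expn_gt0.
  by rewrite map_f // mem_iota; move: lo; rewrite expnS; lia.
by move: hi; rewrite expnS; lia.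
Qed.

Lemma stconn_reachable x (j : 'I_(2 ^ D)) y : derT (stconn_scen x j) s y ->
  (exists2 p, p <= D & y = vertex (ancestor D j p)) \/ (y = t /\ x j).
Proof.
elim=> [|u v _ IH /stconn_scen_edge]; first by left; exists 0; rewrite ?ancestor_root // /vertex eqxx.
case: IH => [[p le_pD ->]|[-> _]]; last first.
  by case=> [[p [a [_ _ _ /esym/vertex_neq_t]]]|[j' _ [/esym/vertex_neq_t]]].
have [lo hi] := andP (ancestor_range le_pD (ltn_ord j)).
have anc_gt0 : 0 < ancestor D j p by apply: leq_trans lo; rewrite expn_gt0.
case=> [[q [a [lt_qD lvl odd_a /vertex_inj ua ->]]]|[j' xj' [/vertex_inj uj' ->]]].
  have half_lvl : 2 ^ q <= a./2 < 2 ^ q.+1.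
    by rewrite -divn2 leq_divRL // ltn_divLR // -!expnSr.
  have a2 : ancestor D j p = a./2.
    by apply: ua => //; apply: leq_trans (andP half_lvl).1; rewrite expn_gt0.
  have qp : q = p by apply: (exp2_level_uniq half_lvl); rewrite -a2 lo hi.
  have lt_pD : p < D by rewrite -qp.
  left; exists p.+1 => //.
  by rewrite -[a]odd_double_half odd_a -a2 qp -(ancestor_half j lt_pD) odd_double_half.
have aD : ancestor D j p = 2 ^ D + j' by apply: uj' => //; rewrite addn_gt0 expn_gt0.
have pD : p = D.
  apply: exp2_level_uniq (ancestor_range le_pD (ltn_ord j)) _.
  by rewrite aD leq_addr /= expnS mul2n -addnn ltn_add2l.
move: aD; rewrite pD ancestor_leaf => /addnI /val_inj jE.
by right; rewrite jE.
Qed.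

Lemma stconn_encodes x (j : 'I_(2 ^ D)) : holds (Q_stconn s t (stconn_scen x j)) = x j.
Proof.
apply: holds_eq; split=> [/stconn_reachable[[p _ /esym/vertex_neq_t]|[]] //|xj].
apply: derT_step (stconn_reach_ancestor x j (leqnn D)) _.
apply/mem_scen_inst; exists (Ordinal lt_Dk); first by rewrite inE /in_scenario eqxx.
rewrite mem_filter /labelled_edges /= eqxx ancestor_leaf mem_cat.
by rewrite map_f ?mem_iota //= orbC map_f // mem_filter xj mem_enum.
Qed.

Lemma stconn_inst_size x : inst_size (stconn_inst x) <= 3 * 2 ^ D - 2.
Proof.
rewrite /inst_size (leq_trans (size_undup _)) // size_cat !size_map size_iota.
apply: leq_trans (leq_add (leqnn _) (size_filter_enum_le x)) _.
have : 0 < 2 ^ D by rewrite expn_gt0.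
rewrite expnS; lia.
Qed.

End StConnectivity.

Definition bit_encoding (T : eqType) (Q : seq T -> Prop) (k D : nat) : Prop :=
  exists (inst : {ffun 'I_(2 ^ D) -> bool} -> seq T) (hs : 'I_k -> seq T -> seq T),
    [/\ forall i, is_hyp (hs i),
        forall x j, holds (Q (scen_inst hs (inst x) (scenario D k j))) = x j
      & forall x, inst_size (inst x) <= 3 * 2 ^ D - 2].

Lemma notsub_bit_encoding k D : D.*2 < k -> bit_encoding Q_notsub k D.
Proof.
move=> lt_Dk; exists (@notsub_inst D), (@notsub_hyp D k).
by split; [exact: notsub_hyp_sub | exact: notsub_encodes | exact: notsub_inst_size].
Qed.

Lemma stconn_bit_encoding s t k D : s <> t -> D.*2 < k -> bit_encoding (Q_stconn s t) k D.
Proof.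
move=> neq_st lt_Dk; exists (stconn_inst s t (D := D)), (stconn_hyp s t D (k := k)).
by split; [exact: stconn_hyp_sub | exact: stconn_encodes | exact: stconn_inst_size].
Qed.

Lemma long_sketch_of_bit_encoding (T : eqType) (Q : seq T -> Prop) k D (P : scheme T k) :
  D.*2 < k -> provisions Q P -> bit_encoding Q k D ->
  exists I hs, [/\ forall i, is_hyp (hs i), inst_size I <= 3 * 2 ^ D - 2 &
    exists w G, [/\ List.In (w, G) (compress P I hs), Rlt 0 w & 2 ^ D <= 16 * size G]].
Proof.
move=> lt_Dk HP [inst [hs [hs_hyp encodes inst_small]]].
have [x [w [G [HG [w_gt0 long]]]]] :=
  encoding_forces_long_sketch HP hs_hyp (fun j => scenario_neq0 j lt_Dk) encodes (expn_gt0 2 D).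
by exists (inst x), hs; split=> //; exists w, G.
Qed.


Lemma choose_depth k n : 0 < k -> 0 < n ->
  exists D, [/\ D.*2 < k, 3 * 2 ^ D - 2 <= n & k <= D.+1.*2 \/ n < 2 ^ D.+3].
Proof.
move=> k_gt0 n_gt0; pose l := trunc_log 2 n.
have small_ok D : D <= l.-2 -> 3 * 2 ^ D - 2 <= n.
  case: D => [|D] le_Dl; first by rewrite expn0; lia.
  have : 2 ^ D.+3 <= 2 ^ l by rewrite leq_exp2l //; lia.
  have := trunc_logP (isT : 1 < 2) n_gt0; rewrite -/l !expnS; lia.
have [le_kl|lt_lk] := leqP (k.-1)./2 l.-2.
  exists (k.-1)./2; split; [|exact: small_ok|left]; rewrite -divn2 -muln2; lia.
exists l.-2; split; [|exact: small_ok|right].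
  by move: lt_lk; rewrite -divn2 -muln2; lia.
apply: leq_trans (trunc_log_ltn n (isT : 1 < 2)) _; rewrite -/l leq_exp2l //; lia.
Qed.

Section SketchSize.
Local Open Scope R_scope.

Lemma INR_expn a e : INR (a ^ e)%N = INR a ^ e.
Proof. by elim: e => [|e IH] //; rewrite expnS mult_INR IH. Qed.

Lemma is_dist_support d : is_dist d -> exists w G, List.In (w, G) d /\ 0 < w.
Proof.
case=> w_ge0 sum_w; apply: NNPP => no_pos.
suff : weight_sum d <= 0 by rewrite sum_w; lra.
elim: d w_ge0 no_pos {sum_w} => [|[w G] d IH] w_ge0 no_pos /=; first lra.
have w_le0 : w <= 0 by apply: Rnot_lt_le => w_gt0; apply: no_pos; exists w, G; split; first left.
suff : weight_sum d <= 0 by lra.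
apply: IH => [p dp|[w' [G' [dG' w'_gt0]]]]; first exact: w_ge0 (or_intror dp).
by apply: no_pos; exists w', G'; split; first right.
Qed.

Lemma sketch_bound k n D g :
  (k <= D.+1.*2)%N \/ (n < 2 ^ D.+3)%N -> (2 ^ D <= 16 * g)%N ->
  1 / 128 * Rmin (Rpower (INR 2) (1 / 128 * INR k)) (INR n) <= INR g.
Proof.
have two : INR 2 = 2 by rewrite /=; lra.
have sixteen : INR 16 = 16 by rewrite /=; lra.
move=> [le_k|lt_n] /leP/le_INR; rewrite mult_INR INR_expn two sixteen => le_g.
  have := le_INR _ _ (elimT leP le_k); rewrite -mul2n mult_INR two => le_k'.
  apply: Rle_trans (Rmult_le_compat_l _ _ _ _ (Rmin_l _ _)) _; first lra.
  apply: Rle_trans (Rmult_le_compat_l _ _ (Rpower 2 (INR D.+1)) _ (Rle_Rpower _ _ _ _ _)) _.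
  - lra.
  - lra.
  - by have := pos_INR D.+1; lra.
  - by have := pos_INR g; rewrite Rpower_pow /=; lra.
have := lt_INR _ _ (elimT ltP lt_n); rewrite INR_expn two /= => lt_n'.
apply: Rle_trans (Rmult_le_compat_l _ _ _ _ (Rmin_r _ _)) _; lra.
Qed.

Lemma requires_large_sketches_of_bit_encoding (T : eqType) (Q : seq T -> Prop) :
  (forall k D, (D.*2 < k)%N -> bit_encoding Q k D) -> requires_large_sketches Q.
Proof.
move=> encoding; exists (1 / 128); split=> [|k n k_gt0 P HP]; first lra.
have [->|n_gt0] := posnP n.
  have [dist _] := HP [::] (fun _ J => J) (fun _ J f => id).
  have [w [G [HG w_gt0]]] := is_dist_support dist.
  exists [::], (fun _ J => J); split=> [_ J f //|]; split=> //.
  exists w, G; do 2!split=> //.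
  have := pos_INR (size G); have := Rmin_r (Rpower (INR 2) (1 / 128 * INR k)) (INR 0).
  rewrite /=; lra.
have [D [lt_Dk small growth]] := choose_depth k_gt0 n_gt0.
have [I [hs [hs_hyp I_small [w [G [HG w_gt0 long]]]]]] :=
  long_sketch_of_bit_encoding lt_Dk HP (encoding k D lt_Dk).
exists I, hs; split=> //; split; first exact: leq_trans small.
by exists w, G; do 2!split=> //; apply: sketch_bound long.
Qed.

End SketchSize.

Theorem mainTheorem14 :
  requires_large_sketches Q_notsub /\
  (forall s t : nat, s <> t -> requires_large_sketches (Q_stconn s t)).
Proof.
split=> [|s t neq_st]; apply: requires_large_sketches_of_bit_encoding => k D.
  exact: notsub_bit_encoding.
exact: stconn_bit_encoding.
Qed.
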